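(* In the adaptive viral marketing setting under the Independent Cascade model, the utility function $f(S,\phi)=|\{v\in E:\exists u\in S,\ \exists w\in E,\ \phi_u((w,v))=1\}|+|S|$ is worst-case monotone and worst-case submodular with respect to the induced prior $p(\phi)$, and it satisfies minimal dependency.
   Context: Adaptive viral marketing setting: $G=(E,Z)$ is a finite directed graph with node set $E$ (the items) and edge set $Z$, and each edge $(u,v)\in Z$ has a propagation probability $p(u,v)\in[0,1]$. Let $X:Z\to\{0,1\}$ be random with independent coordinates, $\Pr[X(u,v)=1]=p(u,v)$ (edge live if $1$, blocked if $0$). The state of a node $u$ is the function $\phi_u:Z\to\{0,1,?\}$ with $\phi_u((w,v))=X(w,v)$ if $w$ is reachable from $u$ by a directed path of live edges (including $w=u$), and $\phi_u((w,v))=?$ otherwise. The realization is $\phi$ with $\phi(u)=\phi_u$; its prior $p$ is the law induced by $X$, $\Phi\sim p$, $U^+=\{\phi:p(\phi)>0\}$. A partial realization is $\psi:S\to O$ with $\mathrm{dom}(\psi)=S\subseteq E$ ($O$ the set of possible states), identified with its set of pairs; $\psi\subseteq\psi'$ means $\psi'$ extends $\psi$; $\phi\sim\psi$ means agreement on $\mathrm{dom}(\psi)$; only $\psi$ with $\Pr[\Phi\sim\psi]>0$ are considered and $p(\phi\mid\psi)=\Pr[\Phi=\phi\mid\Phi\sim\psi]$. $f(S,\psi)=\mathbb{E}[f(S,\Phi)\mid\Phi\sim\psi]$. For $e\notin\mathrm{dom}(\psi)$, $O(e,\psi)=\{o:\exists\phi,\ p(\phi\mid\psi)>0,\ \phi(e)=o\}$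 and $f_{wc}(e\mid\psi)=\min_{o\in O(e,\psi)}\{f(\mathrm{dom}(\psi)\cup\{e\},\psi\cup\{(e,o)\})-f(\mathrm{dom}(\psi),\psi)\}$. $f$ is worst-case submodular if $f_{wc}(e\mid\psi)\ge f_{wc}(e\mid\psi')$ for all $\psi\subseteq\psi'$ and $e\notin\mathrm{dom}(\psi')$; worst-case monotone if $f_{wc}(e\mid\psi)\ge0$ for all $\psi$ and $e\notin\mathrm{dom}(\psi)$; $f$ satisfies minimal dependency if $f(\mathrm{dom}(\psi),\psi)=f(\mathrm{dom}(\psi),\phi)$ for all $\psi$ and all $\phi\in U^+$ with $\phi\sim\psi$. *)

From HB Require Import structures.
From mathcomp Require Import all_boot all_order all_algebra.
Set Implicit Arguments. Unset Strict Implicit. Unset Printing Implicit Defensive.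
Import Order.TTheory GRing.Theory Num.Theory.
Local Open Scope ring_scope.

Section ViralMarketing.
Variables (R : realFieldType) (E : finType) (Z : rel E).

Definition edge := {uv : E * E | Z uv.1 uv.2}.
HB.instance Definition _ := Finite.on edge.

(* X : Z -> {0,1}  (true = live) *)
Definition liveness := {ffun edge -> bool}.
(* node state phi_u : Z -> {0,1,?}; None = '?' *)
Definition state := {ffun edge -> option bool}.
Definition realization := {ffun E -> state}.
(* partial realization psi : dom(psi) -> O, None = not in domain *)
Definition prealization := {ffun E -> option state}.

Variable p : edge -> R.

Definition probX (X : liveness) : R :=
  \prod_(z : edge) (if X z then p z else 1 - p z).

Definition live_rel (X : liveness) : rel E :=
  fun a b => [exists z : edge, (val z == (a, b)) && X z].

Definition reachable (X : liveness) (u w : E) : bool := connect (live_rel X) u w.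

Definition realize (X : liveness) : realization :=
  [ffun u => [ffun z : edge => if reachable X u (val z).1 then Some (X z) else None]].

Definition prior (phi : realization) : R :=
  \sum_(X : liveness | realize X == phi) probX X.

Definition dom (psi : prealization) : {set E} := [set u | psi u != None].

Definition consistent (phi : realization) (psi : prealization) : bool :=
  [forall u, if psi u is Some o then phi u == o else true].

Definition psub (psi psi' : prealization) : Prop :=
  forall u o, psi u = Some o -> psi' u = Some o.

Definition pext (psi : prealization) (e : E) (o : state) : prealization :=
  [ffun u => if u == e then Some o else psi u].

Definition prob_cons (psi : prealization) : R :=
  \sum_(phi : realization | consistent phi psi) prior phi.

Definition cond (phi : realization) (psi : prealization) : R :=
  if consistent phi psi then prior phi / prob_cons psi else 0.

Variable f : {set E} -> realization -> R.

Definition fpart (S : {set E}) (psi : prealization) : R :=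
  \sum_(phi : realization) cond phi psi * f S phi.

Definition Oset (e : E) (psi : prealization) : pred state :=
  [pred o | [exists phi : realization, (0 < cond phi psi) && (phi e == o)]].

Definition gain (e : E) (psi : prealization) (o : state) : R :=
  fpart (e |: dom psi) (pext psi e o) - fpart (dom psi) psi.

(* f_wc(e | psi) = min over o in O(e,psi) of the gain (O(e,psi) is nonempty
   whenever Pr[Phi ~ psi] > 0; the default 0 is never used then) *)
Definition fwc (e : E) (psi : prealization) : R :=
  let vals := [seq gain e psi o | o <- enum (Oset e psi)] in
  \big[Num.min/head 0 vals]_(x <- vals) x.

Definition wc_monotone : Prop :=
  forall (psi : prealization) (e : E),
    0 < prob_cons psi -> e \notin dom psi -> 0 <= fwc e psi.

Definition wc_submodular : Prop :=
  forall (psi psi' : prealization) (e : E),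
    0 < prob_cons psi -> 0 < prob_cons psi' -> psub psi psi' ->
    e \notin dom psi' -> fwc e psi' <= fwc e psi.

Definition minimal_dependency : Prop :=
  forall (psi : prealization) (phi : realization),
    0 < prob_cons psi -> 0 < prior phi -> consistent phi psi ->
    fpart (dom psi) psi = f (dom psi) phi.

End ViralMarketing.

Definition ic_utility (R : realFieldType) (E : finType) (Z : rel E)
    (S : {set E}) (phi : realization Z) : R :=
  (#|[set v : E | [exists u in S, exists z : edge Z,
        ((val z).2 == v) && (phi u z == Some true)]]|)%:R + (#|S|)%:R.

(* Proof idea.
   - Every realization of positive prior comes from a liveness assignment X of
     positive probability, and a partial realization psi of positive
     probability is consistent with such a realization.
   - f(S, phi) only reads the states phi(u), u in S ("locality").  Hence the
     conditional expectation f(dom psi, psi) equals f(dom psi, phi) for every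
     phi consistent with psi: this is minimal dependency, and it turns every
     gain into the explicit count
        gain(e | psi, phi(e)) = |cov({e}, phi) \ cov(dom psi, phi)| + 1,
     which is nonnegative (monotonicity).
   - Submodularity is an exchange argument.  Given an outcome phi(e) = o
     possible under psi (phi realized by X) and any realization X' compatible
     with the larger psi', the spliced assignment Y (X' on edges leaving nodes
     X'-reachable from dom psi', X elsewhere) is compatible with psi', and
     every node newly covered from e under Y is newly covered from e under X.
     So some outcome under psi' has a gain no larger than the gain of o. *)
From HB Require Import structures.
From mathcomp Require Import all_boot all_order all_algebra.
Import Order.TTheory GRing.Theory Num.Theory.
Local Open Scope ring_scope.

Set Implicit Arguments.
Unset Strict Implicit.

Section ClosedSetPaths.
Variables (T : finType) (e : rel T) (A : pred T).
Hypothesis closedA : forall x y, A x -> e x y -> A y.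

Lemma closed_path_last a s : A a -> path e a s -> A (last a s).
Proof.
elim: s a => [|b s IH] a //= Aa /andP[eab pbs].
exact: IH (closedA Aa eab) pbs.
Qed.

Lemma connect_agree_in (e' : rel T) a :
  (forall x y, A x -> e x y = e' x y) -> A a -> connect e a =1 connect e' a.
Proof.
move=> agree Aa w.
have path_eq s : path e a s = path e' a s.
  elim: s a Aa => [|b s IH] a //= Aa.
  rewrite -agree //; case eab: (e a b) => //=.
  exact: IH (closedA Aa eab).
by apply/connectP/connectP=> -[s ps ->]; exists s; rewrite // ?path_eq // -path_eq.
Qed.

(* A path ending outside [A] never visits [A], so it only uses edges on which
   a relation agreeing with [e] outside [A] coincides with [e]. *)
Lemma connect_agree_out (e' : rel T) a w :
  (forall x y, ~~ A x -> e x y = e' x y) -> connect e a w -> ~~ A w ->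
  connect e' a w.
Proof.
move=> agree /connectP[s ps ->] nAw; apply/connectP; exists s => //.
elim: s a ps nAw => [|b s IH] a //= /andP[eab pbs] nAl.
have nAa : ~~ A a.
  apply: contra nAl => Aa; exact: closed_path_last (closedA Aa eab) pbs.
by rewrite -agree // eab /=; apply: IH.
Qed.

End ClosedSetPaths.

Lemma bigmin_head_mem (R : realDomainType) (s : seq R) :
  s != [::] -> \big[Num.min/head 0 s]_(x <- s) x \in s.
Proof.
case: s => // a s _; rewrite big_seq.
apply: (big_ind (fun x => x \in a :: s)) => //=; first exact: mem_head.
by move=> x y xs ys; rewrite minEle; case: ifP.
Qed.

Section IndependentCascade.
Variables (R : realFieldType) (E : finType) (Z : rel E) (p : edge Z -> R).
Hypothesis hp : forall z, 0 <= p z <= 1.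

Implicit Types (phi : realization Z) (psi : prealization Z) (X : liveness Z)
  (S : {set E}).

Lemma edge_factor_ge0 (b : bool) z : 0 <= (if b then p z else 1 - p z).
Proof. by have /andP[p_ge0 p_le1] := hp z; case: b; rewrite // subr_ge0. Qed.

Lemma probX_ge0 X : 0 <= probX p X.
Proof. by apply: prodr_ge0 => z _; apply: edge_factor_ge0. Qed.

Lemma prior_ge0 phi : 0 <= prior p phi.
Proof. by apply: sumr_ge0 => X _; apply: probX_ge0. Qed.

Lemma probX_gt0_factor X z :
  0 < probX p X -> 0 < (if X z then p z else 1 - p z).
Proof.
move=> pX; rewrite lt_def edge_factor_ge0 andbT; apply: contraTneq pX => h0.
by rewrite /probX (bigD1 z) //= h0 mul0r ltxx.
Qed.

Lemma prior_gt0P phi :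
  0 < prior p phi -> exists2 X, realize X = phi & 0 < probX p X.
Proof.
move=> /gt_eqF /negbT /eqP; case/psumr_neq0P=> [X _|X /andP[/eqP <- pX]].
  exact: probX_ge0.
by exists X.
Qed.

Lemma prior_realize_gt0 X : 0 < probX p X -> 0 < prior p (realize X).
Proof.
move=> pX; apply: lt_le_trans pX _; rewrite /prior (bigD1 X) //= lerDl.
by apply: sumr_ge0 => Y _; apply: probX_ge0.
Qed.

Lemma prior_le_prob_cons phi psi :
  consistent phi psi -> prior p phi <= prob_cons p psi.
Proof.
move=> c; rewrite /prob_cons (bigD1 phi) //= lerDl.
by apply: sumr_ge0 => ? _; apply: prior_ge0.
Qed.

Lemma prob_cons_gt0P psi :
  0 < prob_cons p psi -> exists2 phi, consistent phi psi & 0 < prior p phi.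
Proof.
move=> /gt_eqF /negbT /eqP; case/psumr_neq0P=> [phi _|phi /andP[c pr]].
  exact: prior_ge0.
by exists phi.
Qed.

Lemma cond_gt0 phi psi : 0 < prob_cons p psi ->
  (0 < cond p phi psi) = consistent phi psi && (0 < prior p phi).
Proof.
move=> hpc; rewrite /cond; case: (consistent phi psi); last by rewrite ltxx.
by rewrite pmulr_lgt0 // invr_gt0.
Qed.

Lemma cond_sum1 psi : 0 < prob_cons p psi -> \sum_phi cond p phi psi = 1.
Proof. by move=> hpc; rewrite /cond -big_mkcond /= -mulr_suml divff ?gt_eqF. Qed.

Lemma consistent_dom phi psi u :
  consistent phi psi -> u \in dom psi -> psi u = Some (phi u).
Proof.
move=> /forallP/(_ u); rewrite inE; case: (psi u) => [o|] //.
by move=> /eqP ->.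
Qed.

Lemma psub_dom psi psi' : psub psi psi' -> dom psi \subset dom psi'.
Proof.
move=> sub; apply/subsetP=> u; rewrite !inE.
by case h: (psi u) => [o|] //; rewrite (sub _ _ h).
Qed.

Lemma consistent_psub_agree psi psi' phi phi' :
  psub psi psi' -> consistent phi psi -> consistent phi' psi' ->
  {in dom psi, phi =1 phi'}.
Proof.
move=> sub c c' u uS; have := sub _ _ (consistent_dom c uS).
by rewrite (consistent_dom c' (subsetP (psub_dom sub) u uS)) => -[].
Qed.

Lemma dom_pext psi e o : dom (pext psi e o) = e |: dom psi.
Proof. by apply/setP=> u; rewrite !inE ffunE; case: (u == e). Qed.

Lemma consistent_pext phi psi e :
  consistent phi psi -> consistent phi (pext psi e (phi e)).
Proof.
move=> /forallP c; apply/forallP=> u; rewrite ffunE.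
by case: eqP => [->|_] //; apply: c.
Qed.

Lemma fwc_le_gain g e psi o :
  o \in Oset p e psi -> fwc p g e psi <= gain p g e psi o.
Proof.
move=> Oo; apply: (ge_bigmin_seq _ (gain p g e psi o)) => //.
by rewrite map_f // mem_enum.
Qed.

(* Under a partial realization of positive probability the minimum defining
   f_wc is over a nonempty set, hence attained. *)
Lemma fwc_attained g e psi : 0 < prob_cons p psi ->
  exists2 o, o \in Oset p e psi & fwc p g e psi = gain p g e psi o.
Proof.
move=> hpc; have [phi c pr] := prob_cons_gt0P hpc.
have Ophi : phi e \in Oset p e psi.
  by apply/existsP; exists phi; rewrite cond_gt0 // c pr eqxx.
have ne : [seq gain p g e psi o | o <- enum (Oset p e psi)] != [::].
  by apply/eqP=> /(congr1 size); rewrite size_map -cardE (cardD1 (phi e)) Ophi.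
by have /mapP[o]:= bigmin_head_mem ne; rewrite mem_enum; exists o.
Qed.

Definition local_utility (g : {set E} -> realization Z -> R) : Prop :=
  forall S phi1 phi2, {in S, phi1 =1 phi2} -> g S phi1 = g S phi2.

Lemma fpart_local g psi phi0 : local_utility g ->
  0 < prob_cons p psi -> consistent phi0 psi ->
  fpart p g (dom psi) psi = g (dom psi) phi0.
Proof.
move=> loc hpc c0; rewrite /fpart -[RHS]mul1r -(cond_sum1 hpc) mulr_suml.
apply: eq_bigr => phi _; rewrite /cond; case c: (consistent phi psi); last by rewrite !mul0r.
congr (_ * _); apply: loc => u uS.
by have := consistent_dom c uS; rewrite (consistent_dom c0 uS) => -[].
Qed.

Definition covered S phi : {set E} :=
  [set v : E | [exists u in S, exists z : edge Z,
        ((val z).2 == v) && (phi u z == Some true)]].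

Local Notation f := (@ic_utility R E Z).

Lemma ic_utilityE S phi :
  f S phi = (#|covered S phi|)%:R + (#|S|)%:R :> R.
Proof. by []. Qed.

Lemma covered_local S phi1 phi2 :
  {in S, phi1 =1 phi2} -> covered S phi1 = covered S phi2.
Proof.
move=> agree; apply/setP=> v; rewrite !inE.
by apply: eq_existsb => u; case uS: (u \in S); rewrite //= agree.
Qed.

Lemma ic_utility_local : local_utility f.
Proof. by move=> S phi1 phi2 agree; rewrite !ic_utilityE (covered_local agree). Qed.

Lemma covered_mono S S' phi : S \subset S' -> covered S phi \subset covered S' phi.
Proof.
move=> sub; apply/subsetP=> v; rewrite !inE => /existsP[u /andP[uS cov]].
by apply/existsP; exists u; rewrite (subsetP sub).
Qed.

Lemma covered_setU1 e S phi :
  covered (e |: S) phi = covered [set e] phi :|: covered S phi.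
Proof.
apply/setP=> v; rewrite !inE; apply/existsP/orP.
  by case=> u /andP[]; rewrite !inE => /orP[] uS cov; [left|right];
    apply/existsP; exists u; rewrite ?inE uS.
case=> /existsP[u /andP[uS cov]]; exists u; rewrite cov andbT !inE.
  by rewrite inE in uS; rewrite uS.
by rewrite uS orbT.
Qed.

Lemma cardsUD (A B : {set E}) : #|A :|: B| = (#|A :\: B| + #|B|)%N.
Proof.
have := cardsID B (A :|: B); rewrite setIC setKU setDUl setDv setU0 => <-.
by rewrite addnC.
Qed.

Lemma ic_gainE psi e phi :
  0 < prob_cons p psi -> 0 < cond p phi psi -> e \notin dom psi ->
  gain p f e psi (phi e)
    = (#|covered [set e] phi :\: covered (dom psi) phi|)%:R + 1.
Proof.
move=> hpc; rewrite cond_gt0 // => /andP[c pr] eS.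
have c' := consistent_pext e c.
have hpc' : 0 < prob_cons p (pext psi e (phi e)).
  exact: lt_le_trans pr (prior_le_prob_cons c').
rewrite /gain -(dom_pext psi e (phi e)) (fpart_local ic_utility_local hpc' c').
rewrite (fpart_local ic_utility_local hpc c) dom_pext !ic_utilityE.
by rewrite covered_setU1 cardsUD cardsU1 eS !natrD addrACA addrK addrC.
Qed.

Section Splice.
Variables (X X' : liveness Z) (D : {set E}).

Definition reached_from : pred E := fun w => [exists u in D, reachable X' u w].

Definition splice : liveness Z :=
  [ffun z => if reached_from (val z).1 then X' z else X z].

Lemma reached_from_closed x y :
  reached_from x -> live_rel X' x y -> reached_from y.
Proof.
move=> /existsP[u /andP[uD r]] l; apply/existsP; exists u.
by rewrite uD; apply: connect_trans r (connect1 l).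
Qed.

Lemma splice_rel_in x y : reached_from x -> live_rel X' x y = live_rel splice x y.
Proof.
move=> Ax; apply: eq_existsb => z; case: eqP => [hz|] //=.
by rewrite ffunE hz /= Ax.
Qed.

Lemma splice_rel_out x y : ~~ reached_from x -> live_rel splice x y = live_rel X x y.
Proof.
move=> Ax; apply: eq_existsb => z; case: eqP => [hz|] //=.
by rewrite ffunE hz /= (negbTE Ax).
Qed.

Lemma realize_splice_in u : u \in D -> realize splice u = realize X' u.
Proof.
move=> uD; have Au : reached_from u by apply/existsP; exists u; rewrite uD /reachable connect0.
apply/ffunP=> z; rewrite !ffunE /reachable.
rewrite -(connect_agree_in reached_from_closed splice_rel_in Au).
case r: (connect _ u _) => //; rewrite ifT //.
by apply/existsP; exists u; rewrite uD.
Qed.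

Lemma splice_gt0 : 0 < probX p X -> 0 < probX p X' -> 0 < probX p splice.
Proof.
move=> pX pX'; apply: prodr_gt0 => z _; rewrite ffunE.
by case: (reached_from _); [apply: probX_gt0_factor pX' | apply: probX_gt0_factor pX].
Qed.

Lemma splice_new_covered e :
  covered [set e] (realize splice) :\: covered D (realize splice)
    \subset covered [set e] (realize X).
Proof.
apply/subsetP=> v; rewrite !inE => /andP[nDv /existsP[u /andP[]]].
rewrite inE => /eqP -> {u} /existsP[z /andP[zv]]; rewrite !ffunE.
case r: (reachable splice e (val z).1) => //= /eqP[Yz].
have nA : ~~ reached_from (val z).1.
  apply: contra nDv => /existsP[u /andP[uD ru]].
  apply/existsP; exists u; rewrite uD; apply/existsP; exists z.
  rewrite zv realize_splice_in // !ffunE ru /= -Yz ifT //.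
  by apply/existsP; exists u; rewrite uD.
rewrite (negbTE nA) in Yz.
apply/existsP; exists e; rewrite inE eqxx; apply/existsP; exists z.
have rX : reachable X e (val z).1.
  by apply: (connect_agree_out (A := reached_from) _ splice_rel_out) r nA => x y Ax;
    rewrite -splice_rel_in //; apply: reached_from_closed.
by rewrite zv !ffunE rX Yz.
Qed.

End Splice.

Lemma gain_exchange psi psi' e o :
  0 < prob_cons p psi -> 0 < prob_cons p psi' -> psub psi psi' ->
  e \notin dom psi' -> o \in Oset p e psi ->
  exists2 o', o' \in Oset p e psi' &
    gain p f e psi' o' <= gain p f e psi o.
Proof.
move=> hpc hpc' sub eS' /existsP[phi /andP[cp /eqP <-]].
have eS : e \notin dom psi by apply: contra eS'; apply: subsetP (psub_dom sub) e.
have := cp; rewrite cond_gt0 // => /andP[c /prior_gt0P[X hX pX]].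
have [phi' c' /prior_gt0P[X' hX' pX']] := prob_cons_gt0P hpc'.
pose Y := splice X X' (dom psi').
have cY : consistent (realize Y) psi'.
  apply/forallP=> u; case h: (psi' u) => [o'|] //.
  have uS : u \in dom psi' by rewrite inE h.
  by rewrite realize_splice_in // hX'; move: (consistent_dom c' uS); rewrite h => -[->].
have cpY : 0 < cond p (realize Y) psi'.
  by rewrite cond_gt0 // cY prior_realize_gt0 // splice_gt0.
exists (realize Y e); first by apply/existsP; exists (realize Y); rewrite cpY eqxx.
rewrite (ic_gainE hpc' cpY eS') (ic_gainE hpc cp eS) lerD2r ler_nat.
apply: subset_leq_card; apply/subsetP=> v; rewrite in_setD => /andP[nv ev].
rewrite in_setD (covered_local (consistent_psub_agree sub c cY)) -hX.
apply/andP; split.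
  by apply: contra nv; apply/subsetP/covered_mono/psub_dom.
by apply: (subsetP (splice_new_covered X X' (dom psi') e)); rewrite in_setD nv.
Qed.

End IndependentCascade.

Theorem proposition3 (R : realFieldType) (E : finType) (Z : rel E)
    (p : edge Z -> R) (hp : forall z, 0 <= p z <= 1) :
  wc_monotone p (@ic_utility R E Z) /\
  wc_submodular p (@ic_utility R E Z) /\
  minimal_dependency p (@ic_utility R E Z).
Proof.
split; [|split].
- move=> psi e hpc eS; have [o /existsP[phi /andP[cp /eqP <-]] ->] :=
    fwc_attained hp (@ic_utility R E Z) e hpc.
  by rewrite (ic_gainE hp hpc cp eS) addr_ge0 ?ler0n.
- move=> psi psi' e hpc hpc' sub eS'.
  have [o Oo ->] := fwc_attained hp (@ic_utility R E Z) e hpc.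
  have [o' Oo' le_gain] := gain_exchange hp hpc hpc' sub eS' Oo.
  exact: le_trans (fwc_le_gain _ Oo') le_gain.
- move=> psi phi hpc _ c.
  exact: fpart_local (@ic_utility_local R E Z) hpc c.
Qed.
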